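(* Let $(X,\mathcal{A})$ be a $(v,k,\lambda)$-BIBD with $k\ge 2$, and let $r=\lambda(v-1)/(k-1)$. If $(X,\mathcal{A})$ has a weak nesting $\phi:\mathcal{A}\to Y$ into a partial $(w,k+1,\lambda+1)$-BIBD, where $X\subseteq Y$ and $|Y|=w$, then \[ w\ \ge\ \frac{r}{\lambda+1}+\frac{v+2\lambda v+1}{2(\lambda+1)}. \]
   Context: A $(v,k,\lambda)$-BIBD is a pair $(X,\mathcal{A})$ where $X$ is a set of $v$ points and $\mathcal{A}$ is a multiset of $k$-subsets of $X$ (blocks) such that every pair of distinct points lies in exactly $\lambda$ blocks. A partial $(w,k,\lambda)$-BIBD is defined in the same way on $w$ points, except that every pair lies in at most $\lambda$ blocks. Given a $(v,k,\lambda)$-BIBD $(X,\mathcal{A})$ and a set $Y\supseteq X$ with $|Y|=w$, a map $\phi:\mathcal{A}\to Y$ is a weak nesting if $\phi(A)\notin A$ for every block $A$ and the multiset $\{A\cup\{\phi(A)\}:A\in\mathcal{A}\}$ is a partial $(w,k+1,\lambda+1)$-BIBD on $Y$. *)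

From mathcomp Require Import all_boot all_order all_algebra.
Set Implicit Arguments. Unset Strict Implicit. Unset Printing Implicit Defensive.

(* Blocks are given as an indexed family A : 'I_b -> {set T} (a multiset of
   blocks, repetitions allowed), on a point set X : {set T}, T a finType. *)

Definition is_BIBD (T : finType) (X : {set T}) (b : nat) (A : 'I_b -> {set T})
    (v k lam : nat) : Prop :=
  #|X| = v /\
  (forall i, A i \subset X /\ #|A i| = k) /\
  (forall x y, x \in X -> y \in X -> x != y ->
     #|[set i | (x \in A i) && (y \in A i)]| = lam).

Definition is_partial_BIBD (T : finType) (Y : {set T}) (b : nat)
    (B : 'I_b -> {set T}) (w k lam : nat) : Prop :=
  #|Y| = w /\
  (forall i, B i \subset Y /\ #|B i| = k) /\
  (forall x y, x \in Y -> y \in Y -> x != y ->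
     #|[set i | (x \in B i) && (y \in B i)]| <= lam).

Definition weak_nesting (T : finType) (Y : {set T}) (b : nat)
    (A : 'I_b -> {set T}) (phi : 'I_b -> T) (k lam : nat) : Prop :=
  (forall i, phi i \in Y /\ phi i \notin A i) /\
  is_partial_BIBD Y (fun i => A i :|: [set phi i]) #|Y| k.+1 lam.+1.

From mathcomp Require Import all_boot all_order all_algebra.
From mathcomp Require Import zify ring.
Import Order.TTheory GRing.Theory Num.Theory.

Set Implicit Arguments.
Unset Strict Implicit.
Unset Printing Implicit Defensive.

(* Let r be the (constant) replication number and e(x,y) the number of blocks
   through x that are nested with y.  Every block through x is nested with one
   point of Y other than x, so r = sum_(y in Y) e(x,y).  The nested blocks
   through a pair {x,y} are the BIBD blocks through it together with those
   counted by e(x,y) and e(y,x); hence e(x,y) + e(y,x) <= 1 for x, y in X,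
   where the BIBD already uses lam of the lam+1 allowed blocks, and
   e(x,y) <= lam+1 in general.  Summing over x in X gives
   v r <= v(v-1)/2 + v(w-v)(lam+1), which rearranges to the bound. *)

Lemma card_set_nat (I : finType) (P : pred I) : #|[set i | P i]| = \sum_i P i.
Proof. by rewrite -sum1dep_card big_mkcond. Qed.

Lemma card_set_in_nat (I : finType) (Q : {pred I}) (P : pred I) :
  #|[set i in Q | P i]| = \sum_(i in Q) P i.
Proof. by rewrite -sum1dep_card big_mkcondr. Qed.

Definition replication (T : finType) (b : nat) (A : 'I_b -> {set T}) (x : T) :=
  #|[set i | x \in A i]|.

Section Replication.

Variables (T : finType) (X : {set T}) (b : nat) (A : 'I_b -> {set T}).
Variables (v k lam : nat).
Hypothesis hA : is_BIBD X A v k lam.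

Lemma BIBD_replicationE x : x \in X -> replication A x * (k - 1) = lam * (v - 1).
Proof.
case: hA => cardX [blockA pairA] xX.
have cardXx : #|X :\ x| = v - 1 by move: (cardsD1 x X); rewrite xX cardX; lia.
have pair_sum : \sum_(y in X :\ x) #|[set i | (x \in A i) && (y \in A i)]|
    = lam * (v - 1).
  rewrite -cardXx mulnC -sum_nat_const; apply: eq_bigr => y.
  by rewrite !inE => /andP[yx yX]; rewrite pairA // eq_sym.
rewrite -pair_sum /replication card_set_nat big_distrl /=.
under [RHS]eq_bigr => y _ do rewrite card_set_nat.
rewrite exchange_big /=; apply: eq_bigr => i _.
case xAi: (x \in A i); last by rewrite mul0n big1.
have blockXx : [set y in X :\ x | y \in A i] = A i :\ x.
  apply/setP => y; rewrite !inE.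
  case yAi: (y \in A i); last by rewrite !andbF.
  by rewrite (subsetP (blockA i).1 y yAi) !andbT.
rewrite mul1n -card_set_in_nat blockXx.
by move: (cardsD1 x (A i)); rewrite xAi (blockA i).2; lia.
Qed.

Lemma BIBD_replication_const x y : 2 <= k -> x \in X -> y \in X ->
  replication A x = replication A y.
Proof.
move=> k2 xX yX; apply/eqP.
by rewrite -(@eqn_pmul2r (k - 1)) ?subn_gt0 // !BIBD_replicationE.
Qed.

End Replication.

Definition nest_count (T : finType) (b : nat) (A : 'I_b -> {set T})
    (phi : 'I_b -> T) (x y : T) :=
  #|[set i | (x \in A i) && (phi i == y)]|.

Section Nesting.

Variables (T : finType) (b : nat) (A : 'I_b -> {set T}) (phi : 'I_b -> T).
Hypothesis phi_notin : forall i, phi i \notin A i.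

Lemma nest_count_diag x : nest_count A phi x x = 0.
Proof.
apply/eqP; rewrite cards_eq0; apply/eqP/setP => i; rewrite !inE.
by case: eqP => [<-|_]; rewrite ?(negbTE (phi_notin i)) ?andbF.
Qed.

Lemma sum_nest_count (Y : {set T}) x : (forall i, phi i \in Y) ->
  \sum_(y in Y) nest_count A phi x y = replication A x.
Proof.
move=> phiY; rewrite /replication /nest_count card_set_nat.
under eq_bigr => y _ do rewrite card_set_nat.
rewrite exchange_big /=; apply: eq_bigr => i _.
rewrite (big_setD1 (phi i)) //= eqxx andbT big1 ?addn0 // => y.
by rewrite !inE => /andP[/negbTE yphi _]; rewrite eq_sym yphi andbF.
Qed.

Lemma card_nested_pair x y : x != y ->
  #|[set i | (x \in A i :|: [set phi i]) && (y \in A i :|: [set phi i])]|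
  = #|[set i | (x \in A i) && (y \in A i)]|
    + nest_count A phi x y + nest_count A phi y x.
Proof.
move=> xy; rewrite /nest_count !card_set_nat -!big_split /=.
apply: eq_bigr => i _; rewrite !inE ![phi i == _]eq_sym.
move: xy (phi_notin i) => /eqP xy /negbTE phiA.
case: (x =P phi i) => [ex|_]; case: (y =P phi i) => [ey|_] //=.
- by move: xy; rewrite ex ey.
- by rewrite ex phiA; case: (y \in A i).
- by rewrite ey phiA addn0; case: (x \in A i).
- by rewrite !orbF !andbF !addn0.
Qed.

End Nesting.

Lemma weak_nesting_pair_le (T : finType) (Y : {set T}) (b : nat)
    (A : 'I_b -> {set T}) (phi : 'I_b -> T) k lam x y :
  weak_nesting Y A phi k lam -> x \in Y -> y \in Y -> x != y ->
  #|[set i | (x \in A i) && (y \in A i)]|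
    + nest_count A phi x y + nest_count A phi y x <= lam.+1.
Proof.
move=> [phiA [_ [_ pairB]]] xY yY xy.
by rewrite -card_nested_pair ?pairB // => i; case: (phiA i).
Qed.

Lemma tournament_sum_le (T : finType) (X : {set T}) (f : T -> T -> nat) :
  {in X, forall x, f x x = 0} ->
  {in X &, forall x y, x != y -> f x y + f y x <= 1} ->
  2 * \sum_(x in X) \sum_(y in X) f x y <= #|X| * (#|X| - 1).
Proof.
move=> f_diag f_pair.
rewrite mul2n -addnn {2}exchange_big -big_split /= -sum_nat_const.
apply: leq_sum => x xX; rewrite -big_split /= (big_setD1 x) //= f_diag //.
have cardXx : #|X :\ x| = #|X| - 1 by move: (cardsD1 x X); rewrite xX; lia.
rewrite -cardXx -sum1_card; apply: leq_sum => y; rewrite !inE => /andP[yx yX].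
by apply: f_pair; rewrite // eq_sym.
Qed.

Section NestedBIBD.

Variables (T : finType) (X Y : {set T}) (b : nat).
Variables (A : 'I_b -> {set T}) (phi : 'I_b -> T) (v k lam : nat).
Hypotheses (k_ge2 : 2 <= k) (hA : is_BIBD X A v k lam).
Hypotheses (XY : X \subset Y) (hphi : weak_nesting Y A phi k lam).

Let phi_notin i : phi i \notin A i. Proof. exact: (hphi.1 i).2. Qed.
Let phiY i : phi i \in Y. Proof. exact: (hphi.1 i).1. Qed.

Lemma nest_count_sym_le x y : x \in X -> y \in X -> x != y ->
  nest_count A phi x y + nest_count A phi y x <= 1.
Proof.
move=> xX yX xy.
have := weak_nesting_pair_le hphi (subsetP XY x xX) (subsetP XY y yX) xy.
by case: hA => _ [_ ->] //; lia.
Qed.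

Lemma nest_count_le x y : x \in Y -> y \in Y -> x != y ->
  nest_count A phi x y <= lam.+1.
Proof.
move=> xY yY xy; apply: leq_trans (weak_nesting_pair_le hphi xY yY xy).
by rewrite addnAC leq_addl.
Qed.

Lemma nested_BIBD_replication_le x0 : x0 \in X ->
  2 * replication A x0 <= (v - 1) + 2 * ((#|Y| - v) * lam.+1).
Proof.
move=> x0X; have [cardX _] := hA.
have v_gt0 : 0 < v by rewrite -cardX; apply/card_gt0P; exists x0.
have sum_repl : v * replication A x0
    = \sum_(x in X) \sum_(y in Y) nest_count A phi x y.
  rewrite -cardX -sum_nat_const; apply: eq_bigr => x xX.
  by rewrite sum_nest_count // (BIBD_replication_const hA k_ge2 xX x0X).
have inside : 2 * \sum_(x in X) \sum_(y in X) nest_count A phi x y <= v * (v - 1).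
  rewrite -cardX; apply: tournament_sum_le => [x _|x y xX yX].
    exact: nest_count_diag.
  exact: nest_count_sym_le.
have outside : \sum_(x in X) \sum_(y in Y :\: X) nest_count A phi x y
    <= v * ((#|Y| - v) * lam.+1).
  have cardYX : #|Y :\: X| = #|Y| - #|X| by rewrite cardsD (setIidPr XY).
  rewrite -cardX -sum_nat_const; apply: leq_sum => x xX.
  rewrite -cardYX -sum_nat_const.
  apply: leq_sum => y; rewrite inE => /andP[yX yY].
  apply: nest_count_le => //; first exact: (subsetP XY).
  by apply: contraNneq yX => <-.
have split_Y : \sum_(x in X) \sum_(y in Y) nest_count A phi x y
    = \sum_(x in X) \sum_(y in X) nest_count A phi x y
      + \sum_(x in X) \sum_(y in Y :\: X) nest_count A phi x y.
  by rewrite -big_split; apply: eq_bigr => x _; rewrite (big_setID X) (setIidPr XY).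
rewrite -(leq_pmul2l v_gt0); nia.
Qed.

End NestedBIBD.

Theorem theorem3p1 (T : finType) (X Y : {set T}) (b : nat)
    (A : 'I_b -> {set T}) (phi : 'I_b -> T) (v k lam w : nat) :
  (2 <= k)%N -> (0 < v)%N ->
  is_BIBD X A v k lam ->
  X \subset Y -> #|Y| = w ->
  weak_nesting Y A phi k lam ->
  let r : rat := ((lam * (v - 1))%:R / (k - 1)%:R)%R in
  (r / (lam + 1)%:R + (v + 2 * lam * v + 1)%:R / (2 * (lam + 1))%:R
     <= (w%:R : rat))%R.
Proof.
move=> k_ge2 v_gt0 hA XY cardY hphi /=.
have [x0 x0X] : exists x0, x0 \in X by apply/card_gt0P; rewrite hA.1.
set R := replication A x0.
have v_le_w : v <= w by rewrite -cardY -hA.1 subset_leq_card.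
have bound : 2 * R + (v + 2 * lam * v + 1) <= w * (2 * (lam + 1)).
  have := nested_BIBD_replication_le k_ge2 hA XY hphi x0X; rewrite cardY; nia.
have -> : ((lam * (v - 1))%:R / (k - 1)%:R = R%:R :> rat)%R.
  by rewrite -(BIBD_replicationE hA x0X) natrM mulfK // pnatr_eq0 -lt0n subn_gt0.
have common_denom : forall c : nat,
    (R%:R / (lam + 1)%:R + c%:R / (2 * (lam + 1))%:R
     = (2 * R + c)%:R / (2 * (lam + 1))%:R :> rat)%R.
  move=> c; rewrite natrD !natrM; field.
  by rewrite natr1 pnatr_eq0.
by rewrite common_denom ler_pdivrMr -?natrM ?ler_nat // ltr0n muln_gt0 addn1.
Qed.
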